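(* Let $n \geq 2$, $k \geq 1$, $M_1, \dots, M_k \in \mathrm{GL}_n(\mathbb{R})$, $\mathbf g_1, \dots, \mathbf g_k \in \mathbb{R}^n$, $G_i := M_i \cdot \mathbb{Z}^n + \mathbf g_i$ for $1 \le i \le k$, and $F := \bigcup_{i=1}^k G_i$. Let $\mathbf b \in \mathbb{S}^{n-1}$. The following are equivalent. \begin{enumerate} \item $\phi_\varepsilon[F](\mathbf x, \mathbf b)$ is well defined for all $\varepsilon > 0$ and all $\mathbf x \in \mathbb{R}^n$. \item There is an index $i \in \{1, \dots, k\}$ such that $\phi_\varepsilon[G_i](\mathbf x, \mathbf b)$ is well defined for all $\varepsilon > 0$ and all $\mathbf x \in \mathbb{R}^n$. \item At least one of the vectors $M_1^{-1}\mathbf b, \dots, M_k^{-1}\mathbf b$ has rationally independent components. \end{enumerate}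
   Context: For $\mathbf a \in \mathbb{R}^n$, $\mathbf b \in \mathbb{S}^{n-1}$, $l > 0$, let $L(\mathbf a, \mathbf b, l) := \{\mathbf a + \lambda \mathbf b : -l \le \lambda \le l\}$. For $S \subset \mathbb{R}^n$ and $\varepsilon > 0$, the directional visibility function is \[ \phi_\varepsilon[S](\mathbf a, \mathbf b) := \inf\Big\{ l > 0 : L(\mathbf a, \mathbf b, l) \cap \bigcup_{\mathbf s \in S} B_2(\mathbf s, \varepsilon) \neq \varnothing \Big\}, \] where $B_2(\mathbf s,\varepsilon)$ is the open Euclidean ball; it is called well defined at $(\mathbf a, \mathbf b)$ when the set over which the infimum is taken is nonempty. A vector $\mathbf v \in \mathbb{R}^n$ has rationally independent components if there is no $\mathbf q \in \mathbb{Z}^n \setminus \{\mathbf 0\}$ with $\mathbf q \cdot \mathbf v = 0$. *)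

From mathcomp Require Import all_boot all_order all_algebra.
From mathcomp Require Import reals.
Set Implicit Arguments. Unset Strict Implicit. Unset Printing Implicit Defensive.
Import Order.TTheory GRing.Theory Num.Theory.
Local Open Scope ring_scope.

Section Defs.
Variables (R : realType) (n : nat).

Definition dotv (u v : 'cV[R]_n) : R := \sum_(i < n) u i 0 * v i 0.

Definition norm2 (v : 'cV[R]_n) : R := Num.sqrt (dotv v v).

Definition in_sphere (b : 'cV[R]_n) : Prop := norm2 b = 1.

Definition segment (a b : 'cV[R]_n) (l : R) : 'cV[R]_n -> Prop :=
  fun y => exists lam : R, -l <= lam /\ lam <= l /\ y = a + lam *: b.

Definition ball2 (s : 'cV[R]_n) (eps : R) : 'cV[R]_n -> Prop :=
  fun y => norm2 (y - s) < eps.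

Definition thick (S : 'cV[R]_n -> Prop) (eps : R) : 'cV[R]_n -> Prop :=
  fun y => exists s, S s /\ ball2 s eps y.

(* the set over which the infimum defining phi_eps[S](a,b) is taken *)
Definition vis_set (eps : R) (S : 'cV[R]_n -> Prop) (a b : 'cV[R]_n) : R -> Prop :=
  fun l => 0 < l /\ exists y, segment a b l y /\ thick S eps y.

(* phi_eps[S](a,b) is well defined: the above set is nonempty *)
Definition vis_well_defined (eps : R) (S : 'cV[R]_n -> Prop) (a b : 'cV[R]_n) : Prop :=
  exists l, vis_set eps S a b l.

Definition shifted_lattice (M : 'M[R]_n) (g : 'cV[R]_n) : 'cV[R]_n -> Prop :=
  fun x => exists z : 'cV[int]_n, x = M *m map_mx (fun m : int => m%:~R) z + g.

Definition rat_indep (v : 'cV[R]_n) : Prop :=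
  ~ exists q : 'cV[int]_n, q != 0 /\ \sum_(i < n) (q i 0)%:~R * v i 0 = 0.

End Defs.

(* (3) => (2) is Kronecker's theorem: if v := M_i^-1 b has rationally
   independent coordinates and y := M_i^-1 (g_i - x), some t brings t v - y
   arbitrarily close to an integer vector z, i.e. x + t b close to M_i z + g_i.
   Kronecker's theorem is proved by Bohr's argument. Let
   F(t) = 1 + sum_j e(t v_j - y_j) with e(x) = exp(2 pi i x). Expanding F^p
   gives (n+1)^p unimodular terms indexed by the words of length p over
   {0, ..., n}, and by rational independence two words have the same frequency
   exactly when they have the same letter multiplicities. Averaging F(m tau)^p
   against a character over m < N isolates one multiplicity class, so
   |F| <= A bounds every class by A^p + 1 words, whence
   (n+1)^p <= (p+1)^n (A^p + 1); this fails for A < n+1 and p large. Hence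
   |F(t)| comes arbitrarily close to n+1, which forces every e(t v_j - y_j)
   close to 1.

   (1) => (3): if every M_i^-1 b is orthogonal to a nonzero integer vector q_i,
   the linear forms f_i = q_i^T M_i^-1 vanish on b and take values in
   Z + f_i(g_i) on G_i. Moving along one direction at a time yields a point x
   where every f_i(x) - f_i(g_i) is at distance >= mu from Z; then f_i is
   constant on the line x + R b, which therefore stays away from F.

   (2) => (1) holds because G_i is contained in F. *)

From mathcomp Require Import all_boot all_order all_algebra.
From mathcomp Require Import reals trigo complex.
From mathcomp Require Import ring lra zify.
From Stdlib Require Import Classical.
Import Order.TTheory GRing.Theory Num.Theory.
Local Open Scope ring_scope.
Set Implicit Arguments. Unset Strict Implicit. Unset Printing Implicit Defensive.

(* The exponent [p = a q] with [q = 2 a^n + 1] is the one used in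
   [exists_pow_gt_poly]. *)
Lemma exp2_gt_poly a n : (0 < a)%N ->
  (2 * (a * (2 * a ^ n).+1).+1 ^ n < 2 ^ (n.+1 * (2 * a ^ n).+1))%N.
Proof.
move=> a0; set q := (2 * a ^ n).+1.
have q_lt : (q < 2 ^ q)%N by apply: ltn_expl.
have aq_le : ((a * q).+1 <= a * 2 ^ q)%N.
  apply: (@leq_trans (a * q.+1)); first by rewrite mulnS; lia.
  by rewrite leq_mul2l q_lt orbT.
have aq_pow_le : ((a * q).+1 ^ n <= a ^ n * 2 ^ (q * n))%N.
  rewrite expnM -expnMn; case: (n) => [|k]; first by rewrite !expn0.
  by rewrite leq_exp2r.
have double_lt : (2 * a ^ n < 2 ^ q)%N by apply: leq_trans q_lt.
have -> : (n.+1 * q = q + q * n)%N by rewrite mulSn [(n * q)%N]mulnC.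
rewrite expnD.
apply: (@leq_ltn_trans (2 * (a ^ n * 2 ^ (q * n)))).
  by rewrite leq_mul2l aq_pow_le orbT.
by rewrite mulnA ltn_pmul2r ?expn_gt0.
Qed.

Lemma bernoulli_ineq (R : realFieldType) (h : R) (a : nat) :
  0 <= h -> 1 + a%:R * h <= (1 + h) ^+ a.
Proof.
move=> h0; elim: a => [|a IH]; first by rewrite mul0r addr0 expr0.
rewrite exprS; apply: le_trans (_ : (1 + h) * (1 + a%:R * h) <= _).
  rewrite mulrDr mulr1 mulrDl mul1r -natr1 mulrDl mul1r.
  have : 0 <= h * (a%:R * h) by rewrite !mulr_ge0.
  lra.
by rewrite ler_pM2l //; lra.
Qed.

Lemma exists_pow_gt_poly (R : archiRealFieldType) (m : nat) (A : R) :
  (0 < m)%N -> 1 <= A -> A < m.+1%:R ->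
  exists p, (p.+1 ^ m)%N%:R * (A ^+ p + 1) < (m.+1 ^ p)%N%:R.
Proof.
move=> m_gt0 A1 hA.
have A0 : 0 < A by lra.
set h := m.+1%:R / A - 1.
have h0 : 0 < h by rewrite /h subr_gt0 ltr_pdivlMr // mul1r.
have em : (m.+1%:R : R) = A * (1 + h) by rewrite /h addrC subrK mulrC divfK ?gt_eqF.
set a := Num.Def.archi_bound (2 ^+ m.+1 / h).
have ha : 2 ^+ m.+1 < a%:R * h.
  rewrite -ltr_pdivrMr //; apply: archi_boundP.
  by rewrite divr_ge0 ?exprn_ge0 // ltW.
have a0 : (0 < a)%N.
  by rewrite lt0n; apply: contraTneq ha => ->; rewrite mul0r -leNgt exprn_ge0.
set q := (2 * a ^ m).+1; exists (a * q)%N.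
have pow2_le : (2 ^ (m.+1 * q))%N%:R <= (1 + h) ^+ (a * q) :> R.
  rewrite natrX !exprM; apply: lerXn2r.
  - by rewrite nnegrE exprn_ge0.
  - by rewrite nnegrE exprn_ge0 // addr_ge0 // ltW.
  apply: le_trans (bernoulli_ineq a (ltW h0)); apply: ltW.
  by apply: lt_le_trans ha _; rewrite lerDr.
have Ap : 1 <= A ^+ (a * q) by rewrite exprn_ege1.
apply: (@le_lt_trans _ _ ((2 * (a * q).+1 ^ m)%N%:R * A ^+ (a * q))).
  rewrite natrM [_ * _%:R]mulrC -mulrA ler_pM2l ?ltr0n ?expn_gt0 //; lra.
rewrite natrX em exprMn mulrC ltr_pM2l ?exprn_gt0 //.
by apply: lt_le_trans pow2_le; rewrite ltr_nat exp2_gt_poly.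
Qed.

Lemma intr_eq0_of_norm_lt1 (R : realDomainType) (d : int) : `|(d%:~R : R)| < 1 -> d = 0.
Proof.
move=> hd; apply/eqP; apply: contraTT hd => d0.
by rewrite -leNgt -intr_norm ler1z -gtz0_ge1 normr_gt0.
Qed.

Lemma shift_far_from_int (R : realFieldType) (w a : R) : 0 < `|a| <= 1 ->
  exists s, 0 <= s <= 1 /\ forall m : int, `|a| / 4 <= `|w + s * a - m%:~R|.
Proof.
move=> /andP [a0 a1].
case: (classic (forall m : int, `|a| / 4 <= `|w + 1/2 * a - m%:~R|)) => [far|].
  by exists (1/2); split => //; apply/andP; split; lra.
move=> /not_all_ex_not [m1] /negP; rewrite -ltNge => near_m1.
exists 1; split; first by apply/andP; split; lra.
move=> m2; rewrite leNgt; apply/negP => near_m2.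
(* Then [a / 2] is within [|a| / 2] of the integer [m2 - m1], which must be [0]. *)
have half_a : `|1/2 * a| = `|a| / 2 by rewrite normrM gtr0_norm ?divr_gt0 // mulrC mul1r.
have near_d : `|1/2 * a - (m2 - m1)%:~R| < `|a| / 2.
  have -> : 1/2 * a - (m2 - m1)%:~R
      = (w + 1 * a - m2%:~R) - (w + 1/2 * a - m1%:~R) by rewrite intrB; field.
  by apply: le_lt_trans (ler_normB _ _) _; lra.
have d_lt1 : `|((m2 - m1)%:~R : R)| < 1.
  rewrite -[X in `|X|](subKr (1/2 * a)).
  by apply: le_lt_trans (ler_normB _ _) _; lra.
by move: near_d; rewrite (intr_eq0_of_norm_lt1 d_lt1) subr0 half_a ltxx.
Qed.

Lemma far_from_int_perturb (R : realFieldType) (r d mu : R) :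
  (forall m : int, mu <= `|r - m%:~R|) -> `|d| <= mu / 2 ->
  forall m : int, mu / 2 <= `|r + d - m%:~R|.
Proof.
move=> far d_le m; have := far m.
have -> : r - m%:~R = (r + d - m%:~R) - d by ring.
by move=> /le_trans /(_ (ler_normB _ _)); lra.
Qed.

Section Kronecker.
Variable R : realType.
Implicit Types x y : R.
Local Notation C := (Rcomplex R).
Local Notation nc := (@Num.norm R (Rcomplex R)).

Lemma normc_mul (z w : C) : nc (z * w) = nc z * nc w.
Proof. exact: Normc.normcM. Qed.

Lemma normc_exp (z : C) m : nc (z ^+ m) = nc z ^+ m.
Proof.
elim: m => [|m IH]; first exact: Normc.normc1.
by rewrite !exprS normc_mul IH.
Qed.

Lemma normc_natr m : nc m%:R = m%:R.
Proof. by rewrite normrMn [nc 1]Normc.normc1. Qed.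

Definition e2pi x : C := (cos (pi *+ 2 * x) +i* sin (pi *+ 2 * x))%C.

Lemma e2pi0 : e2pi 0 = 1.
Proof. by rewrite /e2pi mulr0 cos0 sin0. Qed.

Lemma e2piD x y : e2pi (x + y) = e2pi x * e2pi y.
Proof. by rewrite /e2pi mulrDr cosD sinD /=; congr Complex; rewrite addrC. Qed.

Lemma e2piMn x m : e2pi (x *+ m) = e2pi x ^+ m.
Proof.
elim: m => [|m IH]; first by rewrite mulr0n e2pi0 expr0.
by rewrite mulrS e2piD IH exprS.
Qed.

Lemma norm_e2pi x : nc (e2pi x) = 1.
Proof. by change (Normc.normc (e2pi x) = 1); rewrite /Normc.normc /= cos2Dsin2 sqrtr1. Qed.

Lemma normc_1De2pi_sqr x : nc (1 + e2pi x) ^+ 2 = 2 + 2 * cos (pi *+ 2 * x).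
Proof.
change (Normc.normc (1 + e2pi x) ^+ 2 = 2 + 2 * cos (pi *+ 2 * x)).
rewrite /Normc.normc /= sqr_sqrtr; last by rewrite addr_ge0 ?sqr_ge0.
have := cos2Dsin2 (pi *+ 2 * x); rewrite add0r.
set c := cos _; set s := sin _ => h.
have -> : (1 + c) ^+ 2 + s ^+ 2 = 1 + 2 * c + (c ^+ 2 + s ^+ 2) by ring.
by rewrite h; ring.
Qed.

Lemma norm_geometric_sum_le (w : C) N : nc w = 1 -> w != 1 ->
  nc (\sum_(m < N) w ^+ m) <= 2 / nc (1 - w).
Proof.
move=> w1 wn1.
have hpos : 0 < nc (1 - w) by rewrite normr_gt0 subr_eq0 eq_sym.
rewrite ler_pdivlMr //.
have -> : nc (\sum_(m < N) w ^+ m) * nc (1 - w) = nc (w ^+ N - 1).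
  by rewrite subrX1 normc_mul mulrC -normrN opprB.
apply: le_trans (ler_normD _ _) _.
by rewrite normrN normc_exp w1 expr1n [nc 1]Normc.normc1.
Qed.

Lemma e2pi_neq1 x : x != 0 -> `|x| < 1/2 -> e2pi x != 1.
Proof.
move=> x0 xh; apply/negP => /eqP H.
have Hs : sin (pi *+ 2 * x) = 0 by move: H => /(congr1 (fun z : C => complex.Im z)).
have pi0 := pi_gt0 R.
have sin_gt0 (z : R) : 0 < z -> z < 1/2 -> 0 < sin (pi *+ 2 * z).
  move=> z0 zh; apply: sin_gt0_pi; apply/andP; split.
    by rewrite mulr_gt0 // mulr2n; lra.
  by rewrite -mulr_natl -mulrA -[ltRHS]mulr1 mulrCA ltr_pM2l //; lra.
case: (ltgtP x 0) => hx.
- have := sin_gt0 (- x); rewrite mulrN sinN Hs oppr0 ltxx oppr_gt0.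
  by rewrite -(ltr0_norm hx) => /(_ hx xh).
- by have := sin_gt0 _ hx; rewrite Hs ltxx -(gtr0_norm hx) => /(_ xh).
- by rewrite hx eqxx in x0.
Qed.

Lemma cos_2piBz x (z : int) : cos (pi *+ 2 * (x - z%:~R)) = cos (pi *+ 2 * x).
Proof.
case: z => k.
  rewrite -(periodicn (@cosD2pi R) k (pi *+ 2 * (x - k%:R))).
  by congr cos; rewrite -mulr_natr; ring.
rewrite NegzE intrN opprK -(periodicn (@cosD2pi R) k.+1 (pi *+ 2 * x)).
by congr cos; rewrite -mulr_natr; ring.
Qed.

Lemma near_int_of_cos_gt x e : 0 < e -> e <= 1/2 ->
  cos (pi *+ 2 * e) < cos (pi *+ 2 * x) ->
  `|x - (Num.floor (x + 1/2))%:~R| < e.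
Proof.
move=> e0 e1 H.
have := floor_itv (x + 1/2); rewrite intrD.
have := cos_2piBz x (Num.floor (x + 1/2)).
set z := (Num.floor (x + 1/2))%:~R => hper /andP [h1 h2].
have pi0 := pi_gt0 R.
have hx : `|x - z| <= 1/2 by rewrite ler_norml; apply/andP; split; lra.
have p2 : 0 < (pi : R) *+ 2 by rewrite mulr2n; lra.
have E : cos (pi *+ 2 * `|x - z|) = cos (pi *+ 2 * x).
  by rewrite -hper -[in RHS]cos_norm normrM (ger0_norm (ltW p2)).
move: H; rewrite -E ltr_cos ?in_itv /=.
- by rewrite ltr_pM2l.
- have w0 : 0 <= `|x - z| by [].
  move: w0 hx; set w := `|x - z| => w0 hx.
  apply/andP; split; rewrite mulr2n mulrDl; nra.
- apply/andP; split; rewrite mulr2n mulrDl; nra.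
Qed.

Lemma norm_1D_unit_sum_gt (m : nat) (u : 'I_m -> C) (eta : R) j :
  (forall i, nc (u i) = 1) -> m.+1%:R - eta < nc (1 + \sum_(i < m) u i) ->
  2 - eta < nc (1 + u j).
Proof.
move=> u1; rewrite (bigD1 j) //= addrA => hsum.
have rest_le : nc (\sum_(i < m | i != j) u i) <= m%:R - 1.
  have : \sum_(i < m) (1 : R) = m%:R by rewrite sumr_const card_ord.
  rewrite (bigD1 j) //= => hm.
  apply: le_trans (ler_norm_sum _ _ _) _.
  by under eq_bigr do rewrite u1; lra.
have := lt_le_trans hsum (@ler_normD _ C (1 + u j) _).
by rewrite -natr1; lra.
Qed.

Section Bohr.
Variables (n : nat) (v y : 'I_n -> R).
Hypothesis v_indep : forall q : 'I_n -> int,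
  \sum_(j < n) (q j)%:~R * v j = 0 -> forall j, q j = 0.

(* Letter [ord0] stands for the constant term [1] of [bohr], letter
   [lift ord0 j] for its [j]-th exponential. *)
Definition freq (u : 'I_n -> R) (k : 'I_n.+1) : R :=
  \sum_(j < n) (k == lift ord0 j)%:R * u j.

Lemma freq_ord0 u : freq u ord0 = 0.
Proof. by apply: big1 => j _; rewrite (negbTE (neq_lift _ _)) mul0r. Qed.

Lemma freq_lift u j : freq u (lift ord0 j) = u j.
Proof.
rewrite /freq (bigD1 j) //= eqxx mul1r big1 ?addr0 // => i hij.
by rewrite (inj_eq lift_inj) eq_sym (negbTE hij) mul0r.
Qed.

Definition bohr t : C := \sum_(k < n.+1) e2pi (t * freq v k - freq y k).

Lemma bohrE t : bohr t = 1 + \sum_(j < n) e2pi (t * v j - y j).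
Proof.
rewrite /bohr big_ord_recl !freq_ord0 mulr0 subrr e2pi0; congr (_ + _).
by apply: eq_bigr => j _; rewrite !freq_lift.
Qed.

Section Power.
Variable p : nat.
Local Notation word := {ffun 'I_p -> 'I_n.+1}.

Definition mult (s : word) (j : 'I_n) : nat := \sum_(i < p) (s i == lift ord0 j).
Definition word_freq (s : word) : R := \sum_(i < p) freq v (s i).
Definition word_phase (s : word) : R := \sum_(i < p) freq y (s i).

Lemma sum_freq_word u (s : word) :
  \sum_(i < p) freq u (s i) = \sum_(j < n) (mult s j)%:R * u j.
Proof.
rewrite exchange_big; apply: eq_bigr => j _.
by rewrite /mult natr_sum mulr_suml.
Qed.

Lemma bohrX t : bohr t ^+ p = \sum_(s : word) e2pi (t * word_freq s - word_phase s).
Proof.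
rewrite -[in LHS](card_ord p) -prodr_const /bohr bigA_distr_bigA /=.
apply: eq_bigr => s _.
by rewrite /word_freq /word_phase mulr_sumr -sumrB (big_morph _ e2piD e2pi0).
Qed.

Definition multf (s : word) : {ffun 'I_n -> 'I_p.+1} := [ffun j => inord (mult s j)].

Lemma mult_le s j : (mult s j <= p)%N.
Proof.
apply: (@leq_trans (\sum_(i < p) 1)%N); last by rewrite sum1_card card_ord.
by apply: leq_sum => i _; exact: leq_b1.
Qed.

Lemma multfK s s' : (multf s == multf s') = [forall j, mult s j == mult s' j].
Proof.
apply/eqP/forallP => [/ffunP H j | H]; last first.
  by apply/ffunP => j; rewrite !ffunE (eqP (H j)).
have := H j; rewrite !ffunE => /(congr1 (@nat_of_ord _)).
by rewrite !inordK ?ltnS ?mult_le // => ->.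
Qed.

Lemma word_freq_phase_eq s s' : multf s = multf s' ->
  word_freq s = word_freq s' /\ word_phase s = word_phase s'.
Proof.
move/eqP; rewrite multfK => /forallP H.
by rewrite /word_freq /word_phase !sum_freq_word; split;
  apply: eq_bigr => j _; rewrite (eqP (H j)).
Qed.

Lemma word_freq_neq s s' : multf s != multf s' -> word_freq s != word_freq s'.
Proof.
rewrite multfK; apply: contraNN; rewrite /word_freq !sum_freq_word => /eqP H.
apply/forallP => j.
have hq : \sum_(i < n) ((mult s i)%:Z - (mult s' i)%:Z)%:~R * v i = 0.
  under eq_bigr do rewrite intrD intrN -!pmulrn mulrBl.
  by rewrite sumrB H subrr.
by have /eqP := v_indep hq j; rewrite subr_eq0.
Qed.

Let V1 : R := \sum_(j < n) `|v j|.

Lemma norm_word_freq_le s : `|word_freq s| <= p%:R * V1.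
Proof.
have freq_le k : `|freq v k| <= V1.
  apply: le_trans (ler_norm_sum _ _ _) (ler_sum _ _) => j _.
  by rewrite normrM ler_piMl //; case: (_ == _); rewrite ?normr1 ?normr0.
apply: le_trans (ler_norm_sum _ _ _) _.
apply: le_trans (ler_sum _ (fun i _ => freq_le (s i))) _.
by rewrite sumr_const card_ord mulr_natl.
Qed.

Definition tau : R := ((p%:R * V1) *+ 4 + 1)^-1.

Lemma tau_gt0 : 0 < tau.
Proof.
have : 0 <= p%:R * V1 by rewrite mulr_ge0 ?sumr_ge0.
by rewrite /tau invr_gt0; lra.
Qed.

Lemma tau_small s s' : `|tau * (word_freq s - word_freq s')| < 1/2.
Proof.
have hb : `|word_freq s - word_freq s'| <= (p%:R * V1) *+ 2.
  by apply: le_trans (ler_normB _ _) _; rewrite mulr2n lerD ?norm_word_freq_le.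
have h0 : 0 <= p%:R * V1 by rewrite mulr_ge0 ?sumr_ge0.
rewrite normrM (gtr0_norm tau_gt0) /tau mulrC ltr_pdivrMr; last lra.
set a := p%:R * V1 in hb h0 *; lra.
Qed.

Let rot s s' : C := e2pi (tau * (word_freq s - word_freq s')).

Definition fiber (s' : word) := [pred s : word | multf s == multf s'].

Definition bohr_avg N (s' : word) : C :=
  \sum_(m < N) bohr (m%:R * tau) ^+ p * e2pi (word_phase s' - m%:R * tau * word_freq s').

Lemma bohr_avgE N s' :
  bohr_avg N s' = \sum_(s : word) e2pi (word_phase s' - word_phase s) * \sum_(m < N) rot s s' ^+ m.
Proof.
rewrite /bohr_avg; under eq_bigr => m _ do rewrite bohrX mulr_suml.
rewrite exchange_big; apply: eq_bigr => s _; rewrite mulr_sumr.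
apply: eq_bigr => m _; rewrite /rot -e2piD -e2piMn -e2piD; congr e2pi.
by rewrite -mulr_natl; ring.
Qed.

Lemma norm_bohr_avg_le A N s' : 0 <= A -> (forall t, nc (bohr t) <= A) ->
  nc (bohr_avg N s') <= N%:R * A ^+ p.
Proof.
move=> A0 hA.
have -> : N%:R * A ^+ p = \sum_(m < N) A ^+ p by rewrite sumr_const card_ord mulr_natl.
apply: le_trans (ler_norm_sum _ _ _) (ler_sum _ _) => m _.
rewrite normc_mul norm_e2pi mulr1 normc_exp.
by apply: lerXn2r; rewrite ?nnegrE ?normr_ge0 ?hA.
Qed.

Lemma norm_bohr_avg_ge N s' :
  #|fiber s'|%:R * N%:R - \sum_(s | multf s != multf s') 2 / nc (1 - rot s s')
  <= nc (bohr_avg N s').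
Proof.
set E := \sum_(s | multf s != multf s') _.
rewrite bohr_avgE (bigID (fun s => multf s == multf s')) /=.
set G := \sum_(s | multf s == multf s') _; set B := \sum_(s | multf s != multf s') _.
have -> : G = N%:R *+ #|fiber s'|.
  rewrite /G -sumr_const; apply: eq_bigr => s /eqP hs.
  rewrite /rot; have [-> ->] := word_freq_phase_eq hs.
  rewrite !subrr mulr0 e2pi0 mul1r.
  by under eq_bigr do rewrite expr1n; rewrite sumr_const card_ord.
have hB : nc B <= E.
  apply: le_trans (ler_norm_sum _ _ _) (ler_sum _ _) => s hs.
  rewrite normc_mul norm_e2pi mul1r; apply: norm_geometric_sum_le; first exact: norm_e2pi.
  apply: e2pi_neq1; last exact: tau_small.
  by rewrite mulf_neq0 ?(gt_eqF tau_gt0) // subr_eq0 word_freq_neq.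
have -> : #|fiber s'|%:R * N%:R = nc (N%:R *+ #|fiber s'|).
  by rewrite normrMn normc_natr mulr_natl.
rewrite lerBlDr; apply: le_trans (lerD (lexx _) hB).
by rewrite -[X in nc X <= _](addrK B); apply: ler_normB.
Qed.

Lemma fiber_card_le A : 0 <= A -> (forall t, nc (bohr t) <= A) ->
  forall s', #|fiber s'|%:R <= A ^+ p + 1.
Proof.
move=> A0 hA s'.
set E := \sum_(s | multf s != multf s') 2 / nc (1 - rot s s').
have E0 : 0 <= E by apply: sumr_ge0 => s _; rewrite divr_ge0.
have EN := archi_boundP E0; set N := Num.Def.archi_bound E in EN.
have N0 : 0 < N%:R :> R by apply: le_lt_trans EN.
have := le_trans (norm_bohr_avg_ge N s') (norm_bohr_avg_le N s' A0 hA).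
rewrite -/E => h.
by rewrite -(ler_pM2r N0) mulrDl mul1r; lra.
Qed.

Lemma card_word_le (B : R) : (forall s', #|fiber s'|%:R <= B) ->
  (n.+1 ^ p)%N%:R <= (p.+1 ^ n)%N%:R * B.
Proof.
move=> hB.
have -> : (n.+1 ^ p)%N = #|{: word}| by rewrite card_ffun !card_ord.
rewrite -sumr_const (partition_big multf predT) //=.
have -> : (p.+1 ^ n)%N%:R * B = \sum_(c : {ffun 'I_n -> 'I_p.+1}) B.
  by rewrite sumr_const card_ffun !card_ord mulr_natl.
apply: ler_sum => c _; rewrite sumr_const.
case: (pickP (fun s : word => multf s == c)) => [s' /eqP <- | none].
  exact: hB.
rewrite eq_card0 => [|s]; last exact: none.
by apply: le_trans (hB (finfun (fun=> ord0))).
Qed.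

End Power.

Lemma bohr_sup A : (0 < n)%N -> A < n.+1%:R -> exists t, A < nc (bohr t).
Proof.
move=> n_gt0; wlog A1 : A / 1 <= A => [wlogA hA|hA].
  have n1 : 1 < n.+1%:R :> R by rewrite ltr1n ltnS.
  case: (lerP 1 A) => A1; first exact: wlogA A1 hA.
  by have [t ht] := wlogA 1 (lexx 1) n1; exists t; apply: lt_trans ht.
apply: NNPP => no_t.
have bohr_le t : nc (bohr t) <= A.
  by rewrite leNgt; apply/negP => ht; apply: no_t; exists t.
have [p hp] := exists_pow_gt_poly n_gt0 A1 hA.
have A0 : 0 <= A by lra.
have := card_word_le (fiber_card_le (p := p) A0 bohr_le).
by rewrite leNgt hp.
Qed.

Theorem kronecker eps : 0 < eps ->
  exists t (z : 'I_n -> int), forall j, `|t * v j - y j - (z j)%:~R| < eps.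
Proof.
move=> eps0; case: (posnP n) => [n0 | n_gt0].
  by exists 0, (fun _ => 0) => j; have := ltn_ord j; rewrite {2}n0.
set e := Num.min eps (1/2).
have e0 : 0 < e by rewrite lt_min eps0 /=; lra.
have e_le_eps : e <= eps by rewrite ge_min lexx.
have e_le : e <= 1/2 by rewrite ge_min lexx orbT.
have pi0 := pi_gt0 R.
set c := cos (pi *+ 2 * e).
have c_lt1 : c < 1.
  rewrite -[X in _ < X](cos0 R) /c ltr_cos ?in_itv /= ?lexx ?pi_ge0 //.
  - by rewrite mulr_gt0 // mulr2n; lra.
  - apply/andP; split; first by rewrite mulr_ge0 // ltW // mulr2n; lra.
    by rewrite mulr2n mulrDl; nra.
have c_geN1 : -1 <= c by exact: cos_geN1.
(* [|1 + e(x)| > 2 - eta] forces [cos (2 pi x) > c], so [x] is within [e] of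
   an integer. *)
set eta := (1 - c) / 2.
have below_n1 : n.+1%:R - eta < n.+1%:R by rewrite /eta; lra.
have [t ht] := bohr_sup n_gt0 below_n1.
exists t, (fun j => Num.floor (t * v j - y j + 1/2)) => j.
apply: (lt_le_trans _ e_le_eps); apply: near_int_of_cos_gt => //.
rewrite bohrE in ht; have hN := norm_1D_unit_sum_gt j (fun i => norm_e2pi _) ht.
have N2 := normc_1De2pi_sqr (t * v j - y j).
set N := nc _ in hN N2.
have : (2 - eta) ^+ 2 < N ^+ 2.
  by rewrite ltr_pXn2r // nnegrE ?normr_ge0 // /eta; lra.
by rewrite N2 /eta -/c; nra.
Qed.

End Bohr.
End Kronecker.

Section FarFromIntegers.
Variables (R : realFieldType) (V : lmodType R) (k : nat).
Variables (f : 'I_k -> V -> R) (c : 'I_k -> R).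
Hypothesis f_linear : forall i u w (s : R), f i (u + s *: w) = f i u + s * f i w.

Definition far_from_int (P : pred 'I_k) (x : V) (mu : R) :=
  forall i, P i -> forall m : int, mu <= `|f i x - c i - m%:~R|.

Lemma far_from_int_step (P : pred 'I_k) i0 x0 mu0 : 0 < mu0 ->
  far_from_int P x0 mu0 -> (exists u, f i0 u != 0) ->
  exists x mu, 0 < mu /\ far_from_int (fun i => P i || (i == i0)) x mu.
Proof.
move=> mu0_gt0 far0 [u fu0].
set B := \sum_(i < k) `|f i u|.
have fu_le i : `|f i u| <= B by rewrite /B (bigD1 i) //= lerDl sumr_ge0.
have B0 : 0 <= B := le_trans (normr_ge0 _) (fu_le i0).
set m1 := Num.min mu0 1.
have m1_gt0 : 0 < m1 by rewrite lt_min mu0_gt0 ltr01.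
have m1_le_mu0 : m1 <= mu0 by rewrite ge_min lexx.
have m1_le1 : m1 <= 1 by rewrite ge_min lexx orbT.
(* Steps of length at most [sig] along [u] move every [f i] by at most
   [mu0 / 2], keeping the forms in [P] far from the integers. *)
set sig := m1 / ((B + 1) * 2).
have sig_gt0 : 0 < sig by rewrite divr_gt0 // mulr_gt0 //; lra.
have sig_fu i : `|sig * f i u| <= m1 / 2.
  have -> : m1 / 2 = sig * (B + 1) by rewrite /sig; field; lra.
  by rewrite normrM (gtr0_norm sig_gt0) ler_pM2l //; have := fu_le i; lra.
set a := sig * f i0 u.
have a_pos : 0 < `|a| <= 1.
  have a0 : a != 0 by apply: mulf_neq0 fu0; rewrite gt_eqF.
  by have := sig_fu i0; rewrite -/a normr_gt0 a0 /=; lra.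
have [s [/andP [s0 s1] far_a]] := shift_far_from_int (f i0 x0 - c i0) a_pos.
exists (x0 + (s * sig) *: u), (Num.min (mu0 / 2) (`|a| / 4)); split.
  by rewrite lt_min; apply/andP; split; [lra | case/andP: a_pos => ? _; lra].
move=> i /orP [Pi | /eqP ->] m; rewrite f_linear ge_min; apply/orP.
- left.
  have -> : f i x0 + s * sig * f i u - c i = f i x0 - c i + s * (sig * f i u) by ring.
  apply: far_from_int_perturb (far0 i Pi) _ m.
  rewrite normrM (ger0_norm s0); apply: le_trans (_ : 1 * (m1 / 2) <= _).
    by apply: ler_pM => //; apply: sig_fu.
  by lra.
- right.
  have -> : f i0 x0 + s * sig * f i0 u - c i0 = f i0 x0 - c i0 + s * a by rewrite /a; ring.
  exact: far_a.
Qed.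

Lemma exists_far_from_int : (forall i, exists u, f i u != 0) ->
  exists x mu, 0 < mu /\ far_from_int predT x mu.
Proof.
move=> fnz.
suff: forall j, (j <= k)%N ->
    exists x mu, 0 < mu /\ far_from_int (fun i => (i < j)%N) x mu.
  by move=> /(_ k (leqnn k)) [x [mu [mu0 far]]]; exists x, mu; split => // i _; apply: far.
elim => [_ | j IH lt_jk]; first by exists 0, 1; split => // i.
have [x0 [mu0 [mu0_gt0 far0]]] := IH (ltnW lt_jk).
have [x [mu [mu_gt0 far]]] := far_from_int_step (i0 := Ordinal lt_jk) mu0_gt0 far0 (fnz _).
exists x, mu; split => // i; rewrite ltnS leq_eqVlt orbC => /orP [lt_ij | /eqP eq_ij].
  by apply: far; rewrite lt_ij.
by apply: far; apply/orP; right; apply/eqP; apply: val_inj.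
Qed.

End FarFromIntegers.

Section Visibility.
Variables (R : realType) (n : nat).
Local Notation intr_mx z := (map_mx (fun m : int => m%:~R : R) z).

Lemma coord_le_norm2 (u : 'cV[R]_n) j : `|u j 0| <= norm2 u.
Proof.
have sq_ge0 i : 0 <= u i 0 * u i 0 by rewrite -expr2 sqr_ge0.
rewrite /norm2 /dotv -sqrtr_sqr ler_sqrt ?sumr_ge0 //.
by rewrite (bigD1 j) //= expr2 lerDl sumr_ge0.
Qed.

Lemma norm2_le_sum (u : 'cV[R]_n) : norm2 u <= \sum_(i < n) `|u i 0|.
Proof.
set S := \sum_(i < n) `|u i 0|.
have S0 : 0 <= S by apply: sumr_ge0.
rewrite /norm2 /dotv -(ger0_norm S0) -sqrtr_sqr ler_sqrt ?sqr_ge0 //.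
rewrite expr2 mulr_suml; apply: ler_sum => i _.
apply: le_trans (ler_norm _) _; rewrite normrM ler_wpM2l //.
by rewrite /S (bigD1 i) //= lerDl sumr_ge0.
Qed.

Lemma norm2_mulmx_le (M : 'M[R]_n) (w : 'cV[R]_n) d : (forall j, `|w j 0| <= d) ->
  norm2 (M *m w) <= (\sum_(i < n) \sum_(j < n) `|M i j|) * d.
Proof.
move=> w_le; apply: le_trans (norm2_le_sum _) _.
rewrite mulr_suml; apply: ler_sum => i _; rewrite mxE mulr_suml.
apply: le_trans (ler_norm_sum _ _ _) (ler_sum _ _) => j _.
by rewrite normrM ler_wpM2l.
Qed.

Lemma norm_form_le (a : 'rV[R]_n) (u : 'cV[R]_n) :
  `|(a *m u) 0 0| <= (\sum_(j < n) `|a 0 j|) * norm2 u.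
Proof.
rewrite mxE mulr_suml; apply: le_trans (ler_norm_sum _ _ _) (ler_sum _ _) => j _.
by rewrite normrM ler_wpM2l // coord_le_norm2.
Qed.

Lemma vis_well_definedP eps (S : 'cV[R]_n -> Prop) a b :
  vis_well_defined eps S a b <-> exists t s, S s /\ norm2 (a + t *: b - s) < eps.
Proof.
split => [[l [_ [y [[t [_ [_ ->]]] [s [Ss near]]]]]] | [t [s [Ss near]]]].
  by exists t, s.
exists (`|t| + 1); split; first by rewrite ltr_pwDr ?normr_ge0.
exists (a + t *: b); split; last by exists s.
have := ler_norm t; have := ler_norm (- t); rewrite normrN => ht ht'.
by exists t; split; [|split] => //; lra.
Qed.

Lemma rat_indepP (v : 'cV[R]_n) : rat_indep v ->
  forall q : 'I_n -> int, \sum_(j < n) (q j)%:~R * v j 0 = 0 -> forall j, q j = 0.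
Proof.
move=> indep q hq j; apply/eqP; apply: contraT => qj0; exfalso; apply: indep.
exists (\col_j q j); split; last by rewrite -[RHS]hq; apply: eq_bigr => i _; rewrite mxE.
by apply: contraNneq qj0 => /matrixP /(_ j 0); rewrite !mxE => ->.
Qed.

Theorem vis_shifted_lattice (M : 'M[R]_n) (g b : 'cV[R]_n) :
  M \in unitmx -> rat_indep (invmx M *m b) ->
  forall eps x, 0 < eps -> vis_well_defined eps (shifted_lattice M g) x b.
Proof.
move=> M_unit indep eps x eps0; apply/vis_well_definedP.
set C := \sum_(i < n) \sum_(j < n) `|M i j|.
have C0 : 0 <= C by do 2!(apply: sumr_ge0 => ? _).
have d0 : 0 < eps / (C + 1) by rewrite divr_gt0 //; lra.
have [t [z near]] := kronecker (fun j => (invmx M *m (g - x)) j 0) (rat_indepP indep) d0.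
set zc : 'cV[int]_n := \col_j z j.
exists t, (M *m intr_mx zc + g); split; first by exists zc.
have -> : x + t *: b - (M *m intr_mx zc + g)
    = M *m (t *: (invmx M *m b) - invmx M *m (g - x) - intr_mx zc).
  rewrite !mulmxBr -scalemxAr !mulKVmx //.
  by apply/matrixP => i j; rewrite !mxE; ring.
have w_le j :
    `|(t *: (invmx M *m b) - invmx M *m (g - x) - intr_mx zc) j 0| <= eps / (C + 1).
  by move/ltW: (near j); rewrite !mxE.
apply: le_lt_trans (norm2_mulmx_le _ w_le) _.
by rewrite -/C mulrA ltr_pdivrMr; nra.
Qed.

Definition lattice_form (M : 'M[R]_n) (q : 'cV[int]_n) : 'rV[R]_n :=
  (intr_mx q)^T *m invmx M.

Lemma lattice_formE (M : 'M[R]_n) (q z : 'cV[int]_n) : M \in unitmx ->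
  (lattice_form M q *m (M *m intr_mx z)) 0 0 = (\sum_(j < n) q j 0 * z j 0)%:~R.
Proof.
move=> M_unit; rewrite /lattice_form mulmxA mulmxKV // mxE rmorph_sum.
by apply: eq_bigr => j _; rewrite !mxE rmorphM.
Qed.

Lemma lattice_form_neq0 (M : 'M[R]_n) (q : 'cV[int]_n) : M \in unitmx -> q != 0 ->
  (lattice_form M q *m (M *m intr_mx q)) 0 0 != 0.
Proof.
move=> M_unit q0; rewrite lattice_formE // intr_eq0 psumr_eq0 => [|j _]; last first.
  by rewrite -expr2 sqr_ge0.
apply: contra q0 => /allP all0; apply/eqP/matrixP => j l; rewrite ord1 mxE.
by have := all0 j (mem_index_enum _); rewrite mulf_eq0 orbb => /eqP.
Qed.

Lemma rat_dep_row (v : 'cV[R]_n) : ~ rat_indep v ->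
  exists q : 'cV[int]_n, q != 0 /\ (intr_mx q)^T *m v = 0.
Proof.
move=> /NNPP [q [q0 hq]]; exists q; split => //.
apply/matrixP => i j; rewrite !ord1 [RHS]mxE -hq mxE.
by apply: eq_bigr => l _; rewrite !mxE.
Qed.

Lemma form_line_misses (a : 'rV[R]_n) (x b s : 'cV[R]_n) t eps :
  a *m b = 0 -> (\sum_(j < n) `|a 0 j|) * eps < `|(a *m (x - s)) 0 0| ->
  ~ norm2 (x + t *: b - s) < eps.
Proof.
move=> ab far near.
have form_eq : a *m (x + t *: b - s) = a *m (x - s).
  by rewrite addrAC mulmxDr -scalemxAr ab scaler0 addr0.
have a_ge0 : 0 <= \sum_(j < n) `|a 0 j| by apply: sumr_ge0.
have := le_trans (norm_form_le a _) (ler_wpM2l a_ge0 (ltW near)).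
by rewrite form_eq => /(lt_le_trans far); rewrite ltxx.
Qed.

Theorem rat_indep_of_vis_union k (M : 'I_k -> 'M[R]_n) (g : 'I_k -> 'cV[R]_n) b :
  (forall i, M i \in unitmx) ->
  (forall eps x, 0 < eps ->
     vis_well_defined eps (fun y => exists i, shifted_lattice (M i) (g i) y) x b) ->
  exists i, rat_indep (invmx (M i) *m b).
Proof.
move=> M_unit vis; apply: NNPP => /not_ex_all_not dep.
have /fin_all_exists [q hq] := fun i => rat_dep_row (dep i).
pose a i := lattice_form (M i) (q i).
pose f i (u : 'cV[R]_n) := (a i *m u) 0 0.
have f_linear i u w (s : R) : f i (u + s *: w) = f i u + s * f i w.
  by rewrite /f mulmxDr -scalemxAr [LHS]mxE [X in _ + X]mxE.
have f_nz i : exists u, f i u != 0.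
  by exists (M i *m intr_mx (q i)); apply: lattice_form_neq0; [|case: (hq i)].
have [x [mu [mu_gt0 far]]] := exists_far_from_int (fun i => f i (g i)) f_linear f_nz.
set Cm := \sum_(i < k) \sum_(j < n) `|a i 0 j|.
have Cm0 : 0 <= Cm by do 2!(apply: sumr_ge0 => ? _).
have eps0 : 0 < mu / (Cm + 1) by rewrite divr_gt0 //; lra.
have /vis_well_definedP [t [s [[i [z ->]] near]]] := vis _ x eps0.
apply: (form_line_misses (a := a i) _ _ near).
  by rewrite /a /lattice_form -mulmxA (proj2 (hq i)).
have Ci : \sum_(j < n) `|a i 0 j| <= Cm.
  by rewrite /Cm (bigD1 i) //= lerDl; do 2!(apply: sumr_ge0 => ? _).
apply: le_lt_trans (ler_wpM2r (ltW eps0) Ci) _.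
apply: (@lt_le_trans _ _ mu); first by rewrite mulrA ltr_pdivrMr; nra.
have -> : (a i *m (x - (M i *m intr_mx z + g i))) 0 0
    = f i x - f i (g i) - (\sum_(j < n) q i j 0 * z j 0)%:~R.
  by rewrite -(lattice_formE _ _ (M_unit i)) /f mulmxBr mulmxDr !mxE; ring.
exact: far.
Qed.

End Visibility.

Unset Implicit Arguments.

Theorem lemma2p1 (R : realType) (n k : nat) (hn : (2 <= n)%N) (hk : (1 <= k)%N)
    (M : 'I_k -> 'M[R]_n) (hM : forall i, M i \in unitmx)
    (g : 'I_k -> 'cV[R]_n) (b : 'cV[R]_n) (hb : in_sphere b) :
  let G := fun i => shifted_lattice (M i) (g i) in
  let F := fun x => exists i, G i x in
  ((forall (eps : R) (x : 'cV[R]_n), 0 < eps -> vis_well_defined eps F x b) <->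
   (exists i, forall (eps : R) (x : 'cV[R]_n), 0 < eps -> vis_well_defined eps (G i) x b))
  /\
  ((exists i, forall (eps : R) (x : 'cV[R]_n), 0 < eps -> vis_well_defined eps (G i) x b) <->
   (exists i, rat_indep (invmx (M i) *m b))).
Proof.
move=> G F.
have union_of_one :
    (exists i, forall (eps : R) x, 0 < eps -> vis_well_defined eps (G i) x b) ->
    forall (eps : R) x, 0 < eps -> vis_well_defined eps F x b.
  move=> [i vis_i] eps x eps0.
  have /vis_well_definedP [t [s [Gs near]]] := vis_i eps x eps0.
  by apply/vis_well_definedP; exists t, s; split => //; exists i.
have one_of_indep : (exists i, rat_indep (invmx (M i) *m b)) ->
    exists i, forall (eps : R) x, 0 < eps -> vis_well_defined eps (G i) x b.
  by move=> [i indep]; exists i; apply: vis_shifted_lattice.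
have indep_of_union := rat_indep_of_vis_union hM.
split; split.
- by move/indep_of_union/one_of_indep.
- exact: union_of_one.
- by move/union_of_one/indep_of_union.
- exact: one_of_indep.
Qed.
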